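(* Let $X$ be a finite set, $\mathcal{T}_X$ the full transformation semigroup on $X$, and $(\mathcal{T}_X,\leq)$ the ordered full transformation semigroup with the natural partial order. For $f,g\in\mathcal{T}_X$, $f\,\mathscr{R}\,g$ in the ordered semigroup $(\mathcal{T}_X,\leq)$ if and only if $f\,\mathscr{R}\,g$ in the semigroup $\mathcal{T}_X$.
   Context: $\mathcal{T}_X$ is the semigroup of all maps $X\to X$ under composition, with maps written on the right and composed left to right. The natural partial order: $f\leq g$ iff $f\mathcal{T}_X^1\subseteq g\mathcal{T}_X^1$ and $f=\alpha f=\alpha g$ for some $\alpha\in\mathcal{T}_X$; with it, $(\mathcal{T}_X,\leq)$ is a regular ordered semigroup. In an ordered semigroup $S$, $a\,\mathscr{R}\,b$ iff $(a\cup aS]=(b\cup bS]$, where $(A]=\{x: x\leq a\text{ for some }a\in A\}$. In the plain semigroup $\mathcal{T}_X$, $\mathscr{R}$ is the usual Green's relation ($f\,\mathscr{R}\,g$ iff $f\mathcal{T}_X^1=g\mathcal{T}_X^1$). *)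

From mathcomp Require Import all_boot.
Set Implicit Arguments.
Unset Strict Implicit.
Unset Printing Implicit Defensive.

(* Full transformation semigroup T_X on a type X: maps X -> X, written on the
   right and composed left to right: x (f * g) = (x f) g. *)
Definition tmul (X : Type) (f g : X -> X) : X -> X := fun x => g (f x).

Definition rideal1 (X : Type) (f : X -> X) : (X -> X) -> Prop :=
  fun h => h = f \/ exists u : X -> X, h = tmul f u.

Definition npo (X : Type) (f g : X -> X) : Prop :=
  (forall h, rideal1 f h -> rideal1 g h) /\
  exists a : X -> X, f = tmul a f /\ f = tmul a g.

Definition downset (X : Type) (A : (X -> X) -> Prop) : (X -> X) -> Prop :=
  fun x => exists a, A a /\ npo x a.

Definition aUaS (X : Type) (f : X -> X) : (X -> X) -> Prop :=
  fun h => h = f \/ exists u : X -> X, h = tmul f u.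

(* Green's R in the ordered semigroup (T_X, <=): (f ∪ fS] = (g ∪ gS]. *)
Definition ordR (X : Type) (f g : X -> X) : Prop :=
  forall h, downset (aUaS f) h <-> downset (aUaS g) h.

Definition greenR (X : Type) (f g : X -> X) : Prop :=
  forall h, rideal1 f h <-> rideal1 g h.

(* Because the natural order already demands [h T^1 ⊆ a T^1] whenever [h <= a],
   every element below a member of [f T^1] lies in [f T^1]. The principal right
   ideal [f ∪ f T = f T^1] is therefore down-closed, so the ordered and the
   plain Green's relation R compare the same sets. *)
From mathcomp Require Import all_boot.

Lemma rideal1_trans (X : Type) (f a h : X -> X) :
  rideal1 f a -> rideal1 a h -> rideal1 f h.
Proof.
move=> [->|[v ->]] // [->|[u ->]]; first by right; exists v.
by right; exists (tmul v u).
Qed.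

Lemma npo_refl (X : Type) (f : X -> X) : npo f f.
Proof. by split=> //; exists id. Qed.

Lemma npo_rideal1 (X : Type) (h a : X -> X) : npo h a -> rideal1 a h.
Proof. by move=> [sub_ha _]; apply: sub_ha; left. Qed.

Lemma downset_aUaS (X : Type) (f h : X -> X) :
  downset (aUaS f) h <-> rideal1 f h.
Proof.
split=> [[a [fa /npo_rideal1 ah]]|fh]; first exact: rideal1_trans fa ah.
by exists h; split; last exact: npo_refl.
Qed.

Theorem mainTheorem7 (X : finType) (f g : X -> X) :
  ordR f g <-> greenR f g.
Proof.
by split=> eqfg h; split=> /downset_aUaS/eqfg/downset_aUaS.
Qed.
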